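(* Let $\mathcal{Q}^2$ be the set of all quadrilaterals $[I,J] := \mathrm{conv}\{-a e_1, b e_1, -c e_2, d e_2\}$ with $a,b,c,d>0$. Assume that $\mu \colon \mathcal{Q}^2 \to \mathbb{R}^2$ is a valuation which is $\mathrm{VL}(2)$-covariant, i.e. $\mu(\phi P) = \phi\,\mu(P)$ whenever $\phi \in \mathrm{VL}(2)$ and $P, \phi P \in \mathcal{Q}^2$. Define $F(r) := \frac12 \mu_1(\mathrm{conv}\{-e_1, r e_1, -e_2, e_2\})$ for $r \in (0,\infty)$, where $\mu_1,\mu_2$ denote the components of $\mu$. Then for all $a,b,c,d>0$, \[ \mu[I,J] = \begin{pmatrix} -\frac1c & \frac1c & -\frac1d & \frac1d \\ -\frac1a & -\frac1b & \frac1a & \frac1b \end{pmatrix} \begin{pmatrix} F(ac)\\ F(bc) \\ F(ad) \\ F(bd)\end{pmatrix}. \] In particular, $\mu[I,J] = \tilde\mu(\mathrm{conv}\{-ae_1, be_1, -ce_2\}) + \tilde\mu(\mathrm{conv}\{-ae_1,be_1,de_2\})$, where for all $a,b,c,d>0$ \[ \tilde\mu(\mathrm{conv}\{-ae_1, be_1, -ce_2\}) := \begin{pmatrix} \frac1c(F(bc)-F(ac)) \\ -\frac1a F(ac) - \frac1b F(bc)\end{pmatrix}, \qquad \tilde\mu(\mathrm{conv}\{-ae_1, be_1, de_2\}) := \begin{pmatrix} \frac1d(F(bd)-F(ad)) \\ \frac1a F(ad) + \frac1b F(bd)\end{pmatrix}. \]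
   Context: $e_1,e_2$ is the standard basis of $\mathbb{R}^2$. $\mathrm{VL}(2)$ is the group of linear maps of $\mathbb{R}^2$ with determinant $1$ or $-1$. A map $\mu$ on a family $\mathcal{S}$ of sets is a valuation if $\mu(K \cup L) + \mu(K \cap L) = \mu(K) + \mu(L)$ whenever $K, L, K\cup L, K \cap L \in \mathcal{S}$. *)

From HB Require Import structures.
From mathcomp Require Import all_boot all_order all_algebra.
From mathcomp Require Import boolp classical_sets reals.
Set Implicit Arguments. Unset Strict Implicit. Unset Printing Implicit Defensive.
Import Order.TTheory GRing.Theory Num.Theory.
Local Open Scope ring_scope.
Local Open Scope classical_set_scope.

Section Defs.
Variable R : realType.

Definition vec2 (x y : R) : 'cV[R]_2 := \col_(i < 2) (if i == ord0 then x else y).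
Definition e1 : 'cV[R]_2 := vec2 1 0.
Definition e2 : 'cV[R]_2 := vec2 0 1.

Definition conv (s : seq 'cV[R]_2) : set 'cV[R]_2 :=
  [set x | exists w : 'I_(size s) -> R,
     (forall i, 0 <= w i) /\ \sum_i w i = 1 /\ x = \sum_i w i *: s`_i].

Definition quad (a b c d : R) : set 'cV[R]_2 :=
  conv [:: - (a *: e1); b *: e1; - (c *: e2); d *: e2].

Definition Q2 (P : set 'cV[R]_2) : Prop :=
  exists a b c d : R, [/\ 0 < a, 0 < b, 0 < c & 0 < d] /\ P = quad a b c d.

Definition is_valuation_Q2 (mu : set 'cV[R]_2 -> 'cV[R]_2) : Prop :=
  forall K L, Q2 K -> Q2 L -> Q2 (K `|` L) -> Q2 (K `&` L) ->
    mu (K `|` L) + mu (K `&` L) = mu K + mu L.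

Definition VL2 (A : 'M[R]_2) : Prop := \det A = 1 \/ \det A = -1.

Definition lin_image (A : 'M[R]_2) (P : set 'cV[R]_2) : set 'cV[R]_2 :=
  (fun x => A *m x) @` P.

Definition VL2_covariant_Q2 (mu : set 'cV[R]_2 -> 'cV[R]_2) : Prop :=
  forall A P, VL2 A -> Q2 P -> Q2 (lin_image A P) ->
    mu (lin_image A P) = A *m mu P.

Definition comp1 (v : 'cV[R]_2) : R := v ord0 ord0.
Definition comp2 (v : 'cV[R]_2) : R := v (lift ord0 ord0) ord0.

Definition Ffun (mu : set 'cV[R]_2 -> 'cV[R]_2) (r : R) : R :=
  2^-1 * comp1 (mu (conv [:: - e1; r *: e1; - e2; e2])).

Definition coef_mx (a b c d : R) : 'M[R]_(2, 4) :=
  \matrix_(i < 2, j < 4)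
    (nth [::] [:: [:: - c^-1; c^-1; - d^-1; d^-1];
                  [:: - a^-1; - b^-1; a^-1; b^-1]] i)`_j.

Definition Fvec (mu : set 'cV[R]_2 -> 'cV[R]_2) (a b c d : R) : 'cV[R]_4 :=
  let F := Ffun mu in
  \col_(j < 4) [:: F (a * c); F (b * c); F (a * d); F (b * d)]`_j.

(* tilde mu on the lower triangle conv{-a e1, b e1, -c e2} *)
Definition mutilde_low (mu : set 'cV[R]_2 -> 'cV[R]_2) (a b c : R) : 'cV[R]_2 :=
  let F := Ffun mu in
  vec2 (c^-1 * (F (b * c) - F (a * c))) (- a^-1 * F (a * c) - b^-1 * F (b * c)).

(* tilde mu on the upper triangle conv{-a e1, b e1, d e2} *)
Definition mutilde_up (mu : set 'cV[R]_2 -> 'cV[R]_2) (a b d : R) : 'cV[R]_2 :=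
  let F := Ffun mu in
  vec2 (d^-1 * (F (b * d) - F (a * d))) (a^-1 * F (a * d) + b^-1 * F (b * d)).

End Defs.

From mathcomp Require Import all_boot all_order all_algebra.
From mathcomp Require Import boolp classical_sets reals.
From mathcomp Require Import ring lra.
Import Order.TTheory GRing.Theory Num.Theory.
Local Open Scope ring_scope.
Local Open Scope classical_set_scope.

(* Write mu1 a b c d for the first component of mu on quad a b c d.  For fixed
   c, d the quadrilaterals are closed under union and intersection,
   [a, b] \/ [a', b'] = [max a a', max b b'] and dually with min, because the
   part of quad a b c d in the half-plane x >= 0 only depends on b and the part
   in x <= 0 only on a.  The valuation property therefore makes mu1 "additive"
   in (a, b), and through the coordinate swap also in (c, d).  The reflections
   make mu1 odd in (a, b) and even in (c, d), and diag(s, 1/s) gives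
   mu1 (s a) (s b) (c/s) (d/s) = s mu1 a b c d.  These relations reduce mu1 to
   its values mu1 1 r 1 1 = 2 F r, and the swap gives the second component. *)

Section Plane.
Variable R : realType.
Implicit Types (a b c d p q r s x y z : R).

Definition mx2 p q r s : 'M[R]_2 :=
  \matrix_(i < 2, j < 2) (if i == ord0 then (if j == ord0 then p else q)
                          else (if j == ord0 then r else s)).

Lemma det_mx2 p q r s : \det (mx2 p q r s) = p * s - q * r.
Proof.
rewrite (expand_det_row _ ord0) !big_ord_recl big_ord0 /cofactor !det_mx11 !mxE /=.
by rewrite !expr0 /=; ring.
Qed.

Lemma mulmx_vec2 p q r s x y :
  mx2 p q r s *m vec2 x y = vec2 (p * x + q * y) (r * x + s * y).
Proof.
apply/matrixP => i j; rewrite !mxE !big_ord_recl big_ord0 !mxE /=.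
by case: (i == ord0); rewrite addr0.
Qed.

Lemma mulmx_mx2 p q r s p' q' r' s' :
  mx2 p q r s *m mx2 p' q' r' s' =
  mx2 (p * p' + q * r') (p * q' + q * s') (r * p' + s * r') (r * q' + s * s').
Proof.
apply/matrixP => i j; rewrite !mxE !big_ord_recl big_ord0 !mxE /=.
by case: (i == ord0); case: (j == ord0); rewrite addr0.
Qed.

Lemma mx2_1 : mx2 1 0 0 1 = 1%:M.
Proof.
apply/matrixP => i j; rewrite !mxE.
by case: i => -[|[|//]] ?; case: j => -[|[|//]] ?.
Qed.

Lemma vec2D x y x' y' : vec2 x y + vec2 x' y' = vec2 (x + x') (y + y').
Proof. by apply/matrixP => i j; rewrite !mxE; case: (i == ord0). Qed.

Lemma vec2Z k x y : k *: vec2 x y = vec2 (k * x) (k * y).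
Proof. by apply/matrixP => i j; rewrite !mxE; case: (i == ord0). Qed.

Lemma vec2N x y : - vec2 x y = vec2 (- x) (- y).
Proof. by apply/matrixP => i j; rewrite !mxE; case: (i == ord0). Qed.

Lemma comp1_vec2 x y : comp1 (vec2 x y) = x.
Proof. by rewrite /comp1 mxE. Qed.

Lemma comp2_vec2 x y : comp2 (vec2 x y) = y.
Proof. by rewrite /comp2 mxE. Qed.

Lemma comp1D (u v : 'cV[R]_2) : comp1 (u + v) = comp1 u + comp1 v.
Proof. by rewrite /comp1 mxE. Qed.

Lemma comp2D (u v : 'cV[R]_2) : comp2 (u + v) = comp2 u + comp2 v.
Proof. by rewrite /comp2 mxE. Qed.

Lemma vec2_eta (v : 'cV[R]_2) : v = vec2 (comp1 v) (comp2 v).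
Proof.
apply/matrixP => i j; rewrite !mxE (ord1 j) /comp1 /comp2.
by case: i => -[|[|//]] ? /=; congr (v _ _); exact: val_inj.
Qed.

Lemma comp1_mulmx_mx2 p q r s v : comp1 (mx2 p q r s *m v) = p * comp1 v + q * comp2 v.
Proof. by rewrite [in LHS](vec2_eta v) mulmx_vec2 comp1_vec2. Qed.

Lemma comp2_mulmx_mx2 p q r s v : comp2 (mx2 p q r s *m v) = r * comp1 v + s * comp2 v.
Proof. by rewrite [in LHS](vec2_eta v) mulmx_vec2 comp2_vec2. Qed.

Lemma vec2_ind (P : 'cV[R]_2 -> Prop) : (forall x y, P (vec2 x y)) -> forall v, P v.
Proof. by move=> Pv v; rewrite [v]vec2_eta. Qed.

Lemma vec2_inj x y x' y' : vec2 x y = vec2 x' y' -> x = x' /\ y = y'.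
Proof.
move=> E; move: (congr1 (@comp1 R) E) (congr1 (@comp2 R) E).
by rewrite !comp1_vec2 !comp2_vec2.
Qed.

Lemma lin_imageV (M N : 'M[R]_2) (P : set 'cV[R]_2) :
  N *m M = 1%:M -> lin_image M P = [set y | P (N *m y)].
Proof.
move=> NM; apply/seteqP; split => y /=.
  by case=> x Px <-; rewrite mulmxA NM mul1mx.
by exists (N *m y) => //; rewrite mulmxA (mulmx1C NM) mul1mx.
Qed.

Definition quad_pt a b c d (w0 w1 w2 w3 : R) : 'cV[R]_2 :=
  vec2 (w1 * b - w0 * a) (w3 * d - w2 * c).

Definition weights4 (w0 w1 w2 w3 : R) :=
  [/\ 0 <= w0, 0 <= w1, 0 <= w2, 0 <= w3 & w0 + w1 + w2 + w3 = 1].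

Lemma quadE a b c d : quad a b c d =
  [set x | exists w0 w1 w2 w3, weights4 w0 w1 w2 w3 /\ x = quad_pt a b c d w0 w1 w2 w3].
Proof.
have combE w0 w1 w2 w3 :
  w0 *: - (a *: e1 R) + w1 *: (b *: e1 R) + w2 *: - (c *: e2 R) + w3 *: (d *: e2 R)
  = quad_pt a b c d w0 w1 w2 w3.
  by rewrite /e1 /e2 /quad_pt !vec2Z !vec2N !vec2Z !vec2D; congr vec2; ring.
rewrite /quad /conv; apply/seteqP; split => x /=.
  move=> [w [w_ge0 []]]; rewrite !big_ord_recl !big_ord0 /= !addr0 !addrA => w1 ->.
  by exists (w ord0), (w (lift ord0 ord0)), (w (lift ord0 (lift ord0 ord0))),
    (w (lift ord0 (lift ord0 (lift ord0 ord0)))); rewrite -combE.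
move=> [w0 [w1 [w2 [w3 [[h0 h1 h2 h3 hs] ->]]]]].
exists (fun i : 'I_4 => [:: w0; w1; w2; w3]`_i).
split; first by case => -[|[|[|[|//]]]].
by rewrite !big_ord_recl !big_ord0 /= -combE !addr0 !addrA.
Qed.

Lemma Q2_quad a b c d : 0 < a -> 0 < b -> 0 < c -> 0 < d -> Q2 (quad a b c d).
Proof. by move=> *; exists a, b, c, d. Qed.

Lemma split_coord z {x y} : 0 < x -> 0 < y -> exists u v : R,
  [/\ 0 <= u, 0 <= v, z = u * y - v * x & u + v = z / y \/ u + v = - (z / x)].
Proof.
move=> x_gt0 y_gt0; have [z_ge0|z_lt0] := lerP 0 z.
  exists (z / y), 0; split => //; last by left; rewrite addr0.
    by rewrite divr_ge0 // ltW.
  by rewrite divfK ?gt_eqF //; ring.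
exists 0, (- (z / x)); split => //; last by right; rewrite add0r.
  by rewrite oppr_ge0 pmulr_lle0 ?invr_gt0 // ltW.
by rewrite mulNr divfK ?gt_eqF //; ring.
Qed.

Section PositiveQuad.
Variables a b c d : R.
Hypotheses (a_gt0 : 0 < a) (b_gt0 : 0 < b) (c_gt0 : 0 < c) (d_gt0 : 0 < d).

(* The missing weight is split between -a e1 and b e1 in the ratio b : a,
   whose combination is the origin. *)
Lemma mem_quad_subconvex w0 w1 w2 w3 :
  0 <= w0 -> 0 <= w1 -> 0 <= w2 -> 0 <= w3 -> w0 + w1 + w2 + w3 <= 1 ->
  quad a b c d (quad_pt a b c d w0 w1 w2 w3).
Proof.
move=> h0 h1 h2 h3 hs; rewrite quadE.
set t := 1 - (w0 + w1 + w2 + w3).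
have ab_gt0 : 0 < a + b by rewrite addr_gt0.
have t_ge0 : 0 <= t by rewrite subr_ge0.
exists (w0 + t * b / (a + b)), (w1 + t * a / (a + b)), w2, w3; split.
  split => //; try by rewrite addr_ge0 // divr_ge0 ?mulr_ge0 // ltW.
  by rewrite /t; field; rewrite gt_eqF.
by rewrite /quad_pt; congr vec2; field; rewrite gt_eqF.
Qed.

Definition quad_ineqs p q :=
  [/\ p / b + q / d <= 1, p / b - q / c <= 1,
      - (p / a) + q / d <= 1 & - (p / a) - q / c <= 1].

Lemma quad_vec2P p q : quad a b c d (vec2 p q) <-> quad_ineqs p q.
Proof.
split.
  rewrite quadE => -[w0 [w1 [w2 [w3 [[h0 h1 h2 h3 hs] /vec2_inj[-> ->]]]]]].
  have ratio_ge0 w x y : 0 <= w -> 0 < x -> 0 < y -> 0 <= w * (x / y).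
    by move=> *; rewrite mulr_ge0 // divr_ge0 // ltW.
  have := ratio_ge0 _ _ _ h0 a_gt0 b_gt0; have := ratio_ge0 _ _ _ h1 b_gt0 a_gt0.
  have := ratio_ge0 _ _ _ h2 c_gt0 d_gt0; have := ratio_ge0 _ _ _ h3 d_gt0 c_gt0.
  rewrite /quad_ineqs !mulrBl -!mulrA !divff ?gt_eqF // !mulr1.
  by move=> *; split; lra.
case=> i1 i2 i3 i4.
have [w1 [w0 [h1 h0 Ep s01]]] := split_coord p a_gt0 b_gt0.
have [w3 [w2 [h3 h2 Eq s23]]] := split_coord q c_gt0 d_gt0.
rewrite [p]Ep [q]Eq; apply: mem_quad_subconvex => //.
by case: s01 => s01; case: s23 => s23; lra.
Qed.

End PositiveQuad.

Lemma quad_subset a a' b b' c d : 0 < a -> a <= a' -> 0 < b -> b <= b' ->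
  quad a b c d `<=` quad a' b' c d.
Proof.
move=> a_gt0 le_aa' b_gt0 le_bb'.
have a'_gt0 := lt_le_trans a_gt0 le_aa'; have b'_gt0 := lt_le_trans b_gt0 le_bb'.
rewrite {1}quadE => _ [w0 [w1 [w2 [w3 [[h0 h1 h2 h3 hs] ->]]]]].
have shrink w x y : 0 <= w -> 0 < x -> x <= y -> 0 <= w * x / y <= w.
  move=> w_ge0 x_gt0 le_xy; have y_gt0 := lt_le_trans x_gt0 le_xy.
  rewrite divr_ge0 ?mulr_ge0 ?(ltW x_gt0) ?(ltW y_gt0) //=.
  by rewrite ler_pdivrMr // ler_wpM2l.
have /andP[h0' s0] := shrink _ _ _ h0 a_gt0 le_aa'.
have /andP[h1' s1] := shrink _ _ _ h1 b_gt0 le_bb'.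
have -> : quad_pt a b c d w0 w1 w2 w3 = quad_pt a' b' c d (w0 * a / a') (w1 * b / b') w2 w3.
  by rewrite /quad_pt !divfK ?gt_eqF.
by apply: mem_quad_subconvex => //; lra.
Qed.

Section HalfPlanes.
Variables a a' b b' c d : R.
Hypotheses (a_gt0 : 0 < a) (a'_gt0 : 0 < a') (b_gt0 : 0 < b) (b'_gt0 : 0 < b').
Hypotheses (c_gt0 : 0 < c) (d_gt0 : 0 < d).

Lemma quad_right_half p q : 0 <= p ->
  quad a b c d (vec2 p q) -> quad a' b c d (vec2 p q).
Proof.
move=> p_ge0; rewrite !quad_vec2P // => -[i1 i2 i3 i4].
have : 0 <= p / a' by rewrite divr_ge0 // ltW.
have : 0 <= p / b by rewrite divr_ge0 // ltW.
by move=> *; split; lra.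
Qed.

Lemma quad_left_half p q : p <= 0 ->
  quad a b c d (vec2 p q) -> quad a b' c d (vec2 p q).
Proof.
move=> p_le0; rewrite !quad_vec2P // => -[i1 i2 i3 i4].
have : p / a <= 0 by rewrite pmulr_lle0 // invr_gt0.
have : p / b' <= 0 by rewrite pmulr_lle0 // invr_gt0.
by move=> *; split; lra.
Qed.

End HalfPlanes.

Section UnionIntersection.
Context {a a' b b' c d : R}.
Hypotheses (a'_gt0 : 0 < a') (le_a'a : a' <= a) (b_gt0 : 0 < b) (le_bb' : b <= b').
Hypotheses (c_gt0 : 0 < c) (d_gt0 : 0 < d).
Let a_gt0 := lt_le_trans a'_gt0 le_a'a.
Let b'_gt0 := lt_le_trans b_gt0 le_bb'.

Lemma quad_union : quad a b c d `|` quad a' b' c d = quad a b' c d.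
Proof.
apply/seteqP; split; first by move=> x [|]; apply: quad_subset.
apply: vec2_ind => p q Hx.
have [p_ge0|p_lt0] := lerP 0 p.
  by right; exact: quad_right_half Hx.
by left; exact: quad_left_half (ltW p_lt0) Hx.
Qed.

Lemma quad_inter : quad a b c d `&` quad a' b' c d = quad a' b c d.
Proof.
apply/seteqP; split; last by move=> x Hx; split; apply: quad_subset Hx.
apply: vec2_ind => p q [Hx Hx'].
have [p_ge0|p_lt0] := lerP 0 p.
  exact: quad_right_half Hx.
exact: quad_left_half (ltW p_lt0) Hx'.
Qed.

End UnionIntersection.

Section Symmetries.
Context {a b c d : R}.
Hypotheses (a_gt0 : 0 < a) (b_gt0 : 0 < b) (c_gt0 : 0 < c) (d_gt0 : 0 < d).

Lemma lin_image_quad_reflect :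
  lin_image (mx2 (-1) 0 0 1) (quad a b c d) = quad b a c d.
Proof.
rewrite (@lin_imageV _ (mx2 (-1) 0 0 1)); last first.
  by rewrite mulmx_mx2 -mx2_1; congr mx2; ring.
apply/seteqP; split; apply: vec2_ind => p q /=;
  rewrite mulmx_vec2 !quad_vec2P // => -[*]; split; lra.
Qed.

Lemma lin_image_quad_swap :
  lin_image (mx2 0 1 1 0) (quad a b c d) = quad c d a b.
Proof.
rewrite (@lin_imageV _ (mx2 0 1 1 0)); last first.
  by rewrite mulmx_mx2 -mx2_1; congr mx2; ring.
apply/seteqP; split; apply: vec2_ind => p q /=;
  rewrite mulmx_vec2 !quad_vec2P // => -[*]; split; lra.
Qed.

Lemma lin_image_quad_scale {s} : 0 < s ->
  lin_image (mx2 s 0 0 s^-1) (quad a b c d) = quad (s * a) (s * b) (c / s) (d / s).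
Proof.
move=> s_gt0; rewrite (@lin_imageV _ (mx2 s^-1 0 0 s)); last first.
  by rewrite mulmx_mx2 -mx2_1; congr mx2; field; rewrite ?gt_eqF.
apply/seteqP; split; apply: vec2_ind => p q /=;
  rewrite mulmx_vec2 !quad_vec2P ?mulr_gt0 ?divr_gt0 ?invr_gt0 // /quad_ineqs
    !invfM !invrK => -[*]; split; lra.
Qed.

End Symmetries.

Section CovariantValuation.
Variable mu : set 'cV[R]_2 -> 'cV[R]_2.
Hypothesis mu_val : is_valuation_Q2 mu.
Hypothesis mu_cov : VL2_covariant_Q2 mu.

Lemma mu_quad_exchange {x x' y y' c d} :
  0 < x -> 0 < x' -> 0 < y -> 0 < y' -> 0 < c -> 0 < d ->
  mu (quad x y c d) + mu (quad x' y' c d) = mu (quad x y' c d) + mu (quad x' y c d).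
Proof.
move=> + + + + c_gt0 d_gt0.
wlog le_x'x : x x' / x' <= x.
  move=> H x_gt0 x'_gt0; have [le_x'x|/ltW le_xx'] := lerP x' x; first exact: H.
  by move=> *; rewrite addrC [RHS]addrC H.
wlog le_yy' : y y' / y <= y'.
  move=> H x_gt0 x'_gt0 y_gt0 y'_gt0; have [le_yy'|/ltW le_y'y] := lerP y y'.
    exact: H.
  by apply/esym/H.
move=> x_gt0 x'_gt0 y_gt0 y'_gt0; apply/esym.
have U := quad_union x'_gt0 le_x'x y_gt0 le_yy' c_gt0 d_gt0.
have I := quad_inter x'_gt0 le_x'x y_gt0 le_yy' c_gt0 d_gt0.
by rewrite -U -I; apply: mu_val; rewrite ?U ?I; apply: Q2_quad.
Qed.

Lemma mu_quad_lin_image M a b c d a' b' c' d' : VL2 M ->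
  0 < a -> 0 < b -> 0 < c -> 0 < d -> 0 < a' -> 0 < b' -> 0 < c' -> 0 < d' ->
  lin_image M (quad a b c d) = quad a' b' c' d' ->
  mu (quad a' b' c' d') = M *m mu (quad a b c d).
Proof.
move=> VM a_gt0 b_gt0 c_gt0 d_gt0 a'_gt0 b'_gt0 c'_gt0 d'_gt0 E.
by rewrite -[in LHS]E; apply: mu_cov => //; rewrite ?E; apply: Q2_quad.
Qed.

Let mu1 a b c d := comp1 (mu (quad a b c d)).

Section Positive.
Context {a b c d : R}.
Hypotheses (a_gt0 : 0 < a) (b_gt0 : 0 < b) (c_gt0 : 0 < c) (d_gt0 : 0 < d).

Lemma mu_quad_reflect : mu (quad b a c d) = mx2 (-1) 0 0 1 *m mu (quad a b c d).
Proof.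
apply: mu_quad_lin_image; rewrite ?lin_image_quad_reflect //.
by rewrite /VL2 det_mx2; right; ring.
Qed.

Lemma mu_quad_swap : mu (quad c d a b) = mx2 0 1 1 0 *m mu (quad a b c d).
Proof.
apply: mu_quad_lin_image; rewrite ?lin_image_quad_swap //.
by rewrite /VL2 det_mx2; right; ring.
Qed.

Lemma mu_quad_scale {s} : 0 < s ->
  mu (quad (s * a) (s * b) (c / s) (d / s)) = mx2 s 0 0 s^-1 *m mu (quad a b c d).
Proof.
move=> s_gt0; apply: mu_quad_lin_image;
  rewrite ?lin_image_quad_scale ?mulr_gt0 ?divr_gt0 ?invr_gt0 //.
by rewrite /VL2 det_mx2; left; rewrite mulr0 subr0 mulfV ?gt_eqF.
Qed.

Lemma mu1_reflect : mu1 b a c d = - mu1 a b c d.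
Proof. by rewrite /mu1 mu_quad_reflect comp1_mulmx_mx2; ring. Qed.

Lemma comp2_mu_quad_reflect : comp2 (mu (quad b a c d)) = comp2 (mu (quad a b c d)).
Proof. by rewrite mu_quad_reflect comp2_mulmx_mx2; ring. Qed.

Lemma comp2_mu_quad : comp2 (mu (quad a b c d)) = mu1 c d a b.
Proof. by rewrite /mu1 mu_quad_swap comp1_mulmx_mx2; ring. Qed.

Lemma mu1_scale {s} : 0 < s -> mu1 (s * a) (s * b) (c / s) (d / s) = s * mu1 a b c d.
Proof. by move=> s_gt0; rewrite /mu1 mu_quad_scale // comp1_mulmx_mx2; ring. Qed.

End Positive.

Lemma mu1_swap_cd {a b c d} : 0 < a -> 0 < b -> 0 < c -> 0 < d -> mu1 a b d c = mu1 a b c d.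
Proof.
move=> *; rewrite -comp2_mu_quad // -comp2_mu_quad_reflect //.
by rewrite comp2_mu_quad.
Qed.

Lemma mu1_diag {x c d} : 0 < x -> 0 < c -> 0 < d -> mu1 x x c d = 0.
Proof. by move=> x_gt0 c_gt0 d_gt0; have := mu1_reflect x_gt0 x_gt0 c_gt0 d_gt0; lra. Qed.

Lemma mu1_exchange_ab {x x' y y' c d} :
  0 < x -> 0 < x' -> 0 < y -> 0 < y' -> 0 < c -> 0 < d ->
  mu1 x y c d + mu1 x' y' c d = mu1 x y' c d + mu1 x' y c d.
Proof. by move=> *; rewrite /mu1 -!comp1D mu_quad_exchange. Qed.

Lemma mu1_exchange_cd {a b x x' y y'} : 0 < a -> 0 < b ->
  0 < x -> 0 < x' -> 0 < y -> 0 < y' ->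
  mu1 a b x y + mu1 a b x' y' = mu1 a b x y' + mu1 a b x' y.
Proof.
move=> *; rewrite -!comp2_mu_quad // -!comp2D; congr comp2.
exact: mu_quad_exchange.
Qed.

Lemma mu1_diff {a b c d} : 0 < a -> 0 < b -> 0 < c -> 0 < d ->
  mu1 a b c d = mu1 1 b c d - mu1 1 a c d.
Proof.
move=> a_gt0 b_gt0 c_gt0 d_gt0.
have := mu1_exchange_ab a_gt0 ltr01 b_gt0 ltr01 c_gt0 d_gt0.
rewrite mu1_diag // (mu1_reflect ltr01 a_gt0) //; lra.
Qed.

Lemma mu1_split_cd {a b c d} : 0 < a -> 0 < b -> 0 < c -> 0 < d ->
  mu1 a b c d = mu1 a b c 1 + mu1 a b d 1 - mu1 a b 1 1.
Proof.
move=> a_gt0 b_gt0 c_gt0 d_gt0.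
have := mu1_exchange_cd a_gt0 b_gt0 c_gt0 ltr01 d_gt0 ltr01.
rewrite (mu1_swap_cd (c := 1) (d := d)) //; lra.
Qed.

Lemma FfunE r : Ffun mu r = 2^-1 * mu1 1 r 1 1.
Proof. by rewrite /Ffun /mu1 /quad !scale1r. Qed.

(* Exchanging [s] and [1] averages [mu1 1 r s 1] between [mu1 1 r s s] and
   [mu1 1 r 1 1]; scaling by [s] turns [mu1 1 r s s] into [mu1 s (r * s) 1 1]. *)
Lemma mu1_1_r_s_1 {r s} : 0 < r -> 0 < s ->
  mu1 1 r s 1 = Ffun mu r + (Ffun mu (r * s) - Ffun mu s) / s.
Proof.
move=> r_gt0 s_gt0.
have := mu1_exchange_cd ltr01 r_gt0 s_gt0 ltr01 ltr01 s_gt0.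
rewrite (mu1_swap_cd (c := s) (d := 1)) // => average.
have := mu1_scale ltr01 r_gt0 s_gt0 s_gt0 s_gt0.
rewrite mulr1 divff ?gt_eqF // (mu1_diff s_gt0) ?mulr_gt0 // (mulrC s r) => scaled.
have -> : mu1 1 r s 1 = 2^-1 * (mu1 1 r s s + mu1 1 r 1 1) by lra.
have -> : mu1 1 r s s = (mu1 1 (r * s) 1 1 - mu1 1 s 1 1) / s.
  by rewrite scaled mulrC mulKf ?gt_eqF.
by rewrite !FfunE; field; rewrite gt_eqF.
Qed.

Lemma mu1_quadE {a b c d} : 0 < a -> 0 < b -> 0 < c -> 0 < d ->
  mu1 a b c d = (Ffun mu (b * c) - Ffun mu (a * c)) / c +
              (Ffun mu (b * d) - Ffun mu (a * d)) / d.
Proof.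
move=> a_gt0 b_gt0 c_gt0 d_gt0.
rewrite (mu1_diff a_gt0) // (mu1_split_cd ltr01 b_gt0) // (mu1_split_cd ltr01 a_gt0) //.
by rewrite !mu1_1_r_s_1 // !mulr1 !divr1; ring.
Qed.

Lemma mu_quadE a b c d : 0 < a -> 0 < b -> 0 < c -> 0 < d ->
  mu (quad a b c d) = vec2
    ((Ffun mu (b * c) - Ffun mu (a * c)) / c + (Ffun mu (b * d) - Ffun mu (a * d)) / d)
    ((Ffun mu (a * d) - Ffun mu (a * c)) / a + (Ffun mu (b * d) - Ffun mu (b * c)) / b).
Proof.
move=> *; rewrite [LHS]vec2_eta comp2_mu_quad // -/(mu1 a b c d) !mu1_quadE //.
by rewrite ![_ * a]mulrC ![_ * b]mulrC.
Qed.

End CovariantValuation.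
End Plane.

Theorem lemma3p3 (R : realType) (mu : set 'cV[R]_2 -> 'cV[R]_2) :
  is_valuation_Q2 mu -> VL2_covariant_Q2 mu ->
  forall a b c d : R, 0 < a -> 0 < b -> 0 < c -> 0 < d ->
    mu (quad a b c d) = coef_mx a b c d *m Fvec mu a b c d /\
    mu (quad a b c d) = mutilde_low mu a b c + mutilde_up mu a b d.
Proof.
move=> mu_val mu_cov a b c d a_gt0 b_gt0 c_gt0 d_gt0.
rewrite mu_quadE // /mutilde_low /mutilde_up vec2D; split; last by congr vec2; ring.
apply/matrixP => i j; rewrite !mxE !big_ord_recl big_ord0 !mxE /=.
by case: i => -[|[|//]] ? /=; ring.
Qed.
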